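(* Let $0<\tau<1$, $q>0$, and define for $x>0$ $$f(x)=\frac{\big(x^2(1-\tau)-qx+1\big)^2}{x^3},\qquad x_2=\frac{q+\sqrt{q^2-4(1-\tau)}}{2(1-\tau)}.$$ Let $\varepsilon,\varepsilon'>0$ satisfy $1+\varepsilon<1/\varepsilon'$. (i) If $q>2-\tau$ and $x_2<1+\varepsilon$, then $$\inf_{1+\varepsilon<x<1/\varepsilon'}f(x)=f(1+\varepsilon)=\frac{\big((1+\varepsilon)^2(1-\tau)-q(1+\varepsilon)+1\big)^2}{(1+\varepsilon)^3}.$$ (ii) If $q>2+\tau$ and $1/\varepsilon'<x_2$, then $$\inf_{1+\varepsilon<x<1/\varepsilon'}f(x)=f(1/\varepsilon')=\frac{1}{\varepsilon'}\big((1-\tau)-q\varepsilon'+(\varepsilon')^2\big)^2.$$ *)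

From HB Require Import structures.
From mathcomp Require Import all_boot all_order all_algebra.
From mathcomp Require Import all_classical all_reals.
Set Implicit Arguments. Unset Strict Implicit. Unset Printing Implicit Defensive.
Import Order.TTheory GRing.Theory Num.Theory.
Local Open Scope ring_scope.

Definition fL4 {R : realType} (tau q x : R) : R :=
  (x ^+ 2 * (1 - tau) - q * x + 1) ^+ 2 / x ^+ 3.

Definition x2L4 {R : realType} (tau q : R) : R :=
  (q + Num.sqrt (q ^+ 2 - 4 * (1 - tau))) / (2 * (1 - tau)).

From HB Require Import structures.
From mathcomp Require Import all_boot all_order all_algebra.
From mathcomp Require Import all_classical all_reals all_analysis.
From mathcomp Require Import ring lra.
Import Order.TTheory GRing.Theory Num.Theory.
Import numFieldNormedType.Exports.
Local Open Scope classical_set_scope.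
Local Open Scope ring_scope.

(* Write g(x) = x^2 (1 - tau) - q x + 1, so that f = g^2 / x^3 = k(sqrt x)^2 with
   k(u) = g(u^2) / u^3.  Unlike f, k is nondecreasing on [s0, +oo) as soon as
   s0^2 (s0^2 (1 - tau) + q) >= 3, the numerator of k(u) - k(s) being
   (u - s) ((us)^3 (1 - tau) + q (us)^2 - (u^2 + us + s^2)).
   In (i), x_2 is the larger root of g, so 0 < g(1 + eps) and the monotonicity
   condition holds at s0 = sqrt(1 + eps); hence 0 <= k(sqrt(1 + eps)) <= k(sqrt x).
   In (ii), q > 2 + tau gives monotonicity on [1, +oo) and g(1) < 0, so
   g(1/eps') < 0 and k(sqrt x) <= k(sqrt(1/eps')) <= 0.  Either way f is bounded
   below by its value at an endpoint of the open interval, and continuity at that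
   endpoint makes this bound the infimum. *)

Section InfAtClosurePoint.
Context {R : realType}.

Lemma inf_image_eq_at_closure (F : R -> R) (A : set R) (c : R) :
  {for c, continuous F} -> closure A c -> (forall x, A x -> F c <= F x) ->
  inf (F @` A) = F c.
Proof.
move=> Fc Ac Fmin.
have [x [Ax _]] := Ac setT filterT.
have lbFc : lbound (F @` A) (F c) by move=> _ [y Ay <-]; exact: Fmin.
apply/eqP; rewrite eq_le lb_le_inf ?andbT //; last by exists (F x), x.
have FAc : closure (F @` A) (F c).
  move=> B /Fc FB; have [y [Ay By]] := Ac _ FB.
  by exists (F y); split => //; exists y.
have closure_ge_inf : closure (F @` A) `<=` [set y | inf (F @` A) <= y].
  rewrite [X in _ `<=` X](closure_id _).1; last exact: closed_ge.
  by apply: closureS; apply: ge_inf; exists (F c).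
exact: closure_ge_inf FAc.
Qed.

Lemma closure_itvoo_left (l r : R) : l < r -> closure `]l, r[%classic l.
Proof.
move=> lr B lB.
have : \forall y \near l^'+, `]l, r[%classic y /\ B y.
  near=> y; split; last by near: y; exact: cvg_within.
  rewrite /= in_itv /=; apply/andP; split; near: y; first exact: nbhs_right_gt.
  exact: nbhs_right_lt.
by move=> /filter_ex [y ?]; exists y.
Unshelve. all: by end_near. Qed.

Lemma closure_itvoo_right (l r : R) : l < r -> closure `]l, r[%classic r.
Proof.
move=> lr B rB.
have : \forall y \near r^'-, `]l, r[%classic y /\ B y.
  near=> y; split; last by near: y; exact: cvg_within.
  rewrite /= in_itv /=; apply/andP; split; near: y; first exact: nbhs_left_gt.
  exact: nbhs_left_lt.
by move=> /filter_ex [y ?]; exists y.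
Unshelve. all: by end_near. Qed.

End InfAtClosurePoint.

Section Lemma4p2Function.
Context {R : realType}.
Implicit Types tau q c s u x y : R.

Definition gL4 (tau q x : R) : R := x ^+ 2 * (1 - tau) - q * x + 1.

Lemma fL4_continuous tau q c : c != 0 -> {for c, continuous (fL4 tau q)}.
Proof.
move=> c0; have X2 : {for c, continuous (fun x : R => x ^+ 2)} := @exprn_continuous R 2 c.
have gc : {for c, continuous (gL4 tau q)}.
  apply: continuousD; last exact: cst_continuous.
  apply: continuousB; first by apply: continuousM X2 _; exact: cst_continuous.
  by apply: continuousM; [exact: cst_continuous | exact: cvg_id].
apply: continuousM; first exact: (continuous_comp gc (@exprn_continuous R 2 _)).
by apply: continuousV; [rewrite expf_neq0 | exact: (@exprn_continuous R 3)].
Qed.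

Definition kL4 (tau q u : R) : R := gL4 tau q (u ^+ 2) / u ^+ 3.

Lemma fL4_sqrt tau q x : 0 <= x -> fL4 tau q x = kL4 tau q (Num.sqrt x) ^+ 2.
Proof. by move=> x0; rewrite /kL4 expr_div_n -exprM mulnC exprM sqr_sqrtr. Qed.

Lemma kL4_sqrt tau q x : 0 <= x -> kL4 tau q (Num.sqrt x) = gL4 tau q x / Num.sqrt x ^+ 3.
Proof. by move=> x0; rewrite /kL4 sqr_sqrtr. Qed.

Lemma kL4_sub tau q u s : u != 0 -> s != 0 ->
  kL4 tau q u - kL4 tau q s = (u - s) *
    ((u * s) ^+ 3 * (1 - tau) + q * (u * s) ^+ 2 - (u ^+ 2 + u * s + s ^+ 2)) / (u * s) ^+ 3.
Proof. by move=> u0 s0; rewrite /kL4 /gL4; field; rewrite u0 s0. Qed.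

Lemma kL4_le {tau q s0 s u} : tau <= 1 -> 0 <= q -> 0 < s0 ->
  3 <= s0 ^+ 2 * (s0 ^+ 2 * (1 - tau) + q) -> s0 <= s -> s <= u ->
  kL4 tau q s <= kL4 tau q u.
Proof.
move=> tau1 q0 s0_gt0 hs0 s0s su.
have s_gt0 : 0 < s by lra.
have u_gt0 : 0 < u by lra.
have s0s2 : s0 ^+ 2 <= u * s by nra.
have hs : 3 <= s ^+ 2 * (u * s * (1 - tau) + q).
  apply: (le_trans hs0); apply: ler_pM; nra.
have hu : 3 * u ^+ 2 <= (u * s) ^+ 2 * (u * s * (1 - tau) + q) by nra.
rewrite -subr_ge0 kL4_sub ?gt_eqF //.
apply: divr_ge0; last by rewrite exprn_ge0 ?mulr_ge0 // ltW.
apply: mulr_ge0; first lra.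
nra.
Qed.

Lemma gL4_factor_root tau q y c : gL4 tau q y = 0 ->
  y * gL4 tau q c = (c - y) * (c * y * (1 - tau) - 1).
Proof. by move=> gy; rewrite -[RHS]addr0 -(mulr0 c) -gy /gL4; ring. Qed.

Lemma x2L4_root {tau q} : tau < 1 -> 0 < q -> 4 * (1 - tau) <= q ^+ 2 ->
  [/\ 0 < x2L4 tau q, gL4 tau q (x2L4 tau q) = 0 & 1 <= x2L4 tau q ^+ 2 * (1 - tau)].
Proof.
move=> tau1 q0 disc; have a0 : 0 < 1 - tau by rewrite subr_gt0.
rewrite /gL4 /x2L4; set d := Num.sqrt _.
have d0 : 0 <= d := sqrtr_ge0 _.
have dd : d ^+ 2 = q ^+ 2 - 4 * (1 - tau) by rewrite sqr_sqrtr ?subr_ge0.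
set y := (q + d) / _.
have y0 : 0 < y by apply: divr_gt0; lra.
have ey : y * (2 * (1 - tau)) = q + d by rewrite mulfVK ?mulf_neq0 ?gt_eqF.
split=> //; nra.
Qed.

Lemma gL4_gt0_above_root {tau q y c} : gL4 tau q y = 0 -> 0 < y -> 1 <= y ^+ 2 * (1 - tau) ->
  y < c -> 0 < gL4 tau q c /\ 3 <= c * (c * (1 - tau) + q).
Proof.
move=> gy y0 y_large yc.
have a0 : 0 < 1 - tau by nra.
have gc : 0 < gL4 tau q c.
  have cya : 1 < c * y * (1 - tau).
    by apply: le_lt_trans y_large _; rewrite ltr_pM2r // expr2 ltr_pM2r.
  have : 0 < y * gL4 tau q c by rewrite gL4_factor_root // mulr_gt0 // subr_gt0.
  by rewrite pmulr_rgt0.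
split=> //; move: gc gy; rewrite /gL4; nra.
Qed.

Lemma gL4_lt0_below_root {tau q y c} : gL4 tau q y = 0 -> 2 - tau < q ->
  1 < c -> c < y -> gL4 tau q c < 0.
Proof.
move=> gy hq c1 cy; have y0 : 0 < y by lra.
have ya : 1 < y * (1 - tau).
  have : y * gL4 tau q 1 < 0 by rewrite pmulr_rlt0 // /gL4; lra.
  by rewrite gL4_factor_root // mul1r nmulr_rlt0; lra.
have cya : 1 < c * y * (1 - tau) by nra.
have : y * gL4 tau q c < 0 by rewrite gL4_factor_root // nmulr_rlt0; lra.
by rewrite pmulr_rlt0.
Qed.

Lemma fL4_min_left tau q c x : tau <= 1 -> 0 <= q -> 0 < c ->
  0 <= gL4 tau q c -> 3 <= c * (c * (1 - tau) + q) -> c <= x ->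
  fL4 tau q c <= fL4 tau q x.
Proof.
move=> tau1 q0 c0 gc hc cx.
have sc0 : 0 < Num.sqrt c by rewrite sqrtr_gt0.
rewrite !fL4_sqrt ?(ltW c0) //; last lra.
have kc : 0 <= kL4 tau q (Num.sqrt c).
  by rewrite kL4_sqrt ?(ltW c0) // divr_ge0 // exprn_ge0 // ltW.
have kcx : kL4 tau q (Num.sqrt c) <= kL4 tau q (Num.sqrt x).
  apply: (kL4_le tau1 q0 sc0) => //; first by rewrite sqr_sqrtr // ltW.
  by rewrite ler_sqrt //; lra.
by apply: lerXn2r; rewrite // nnegrE (le_trans kc kcx).
Qed.

Lemma fL4_min_right tau q c x : tau <= 1 -> 0 <= q -> 2 + tau <= q ->
  gL4 tau q c <= 0 -> 1 <= x -> x <= c -> fL4 tau q c <= fL4 tau q x.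
Proof.
move=> tau1 q0 hq gc x1 xc.
rewrite !fL4_sqrt; try lra.
have sx1 : 1 <= Num.sqrt x by rewrite -sqrtr1 ler_sqrt //; lra.
have kc : kL4 tau q (Num.sqrt c) <= 0.
  by rewrite kL4_sqrt; [rewrite mulr_le0_ge0 // invr_ge0 exprn_ge0 // sqrtr_ge0 | lra].
have kxc : kL4 tau q (Num.sqrt x) <= kL4 tau q (Num.sqrt c).
  apply: (kL4_le tau1 q0 ltr01) => //; first by rewrite expr1n !mul1r; lra.
  by rewrite ler_sqrt //; lra.
rewrite -sqrrN -[X in _ <= X]sqrrN.
by apply: lerXn2r; rewrite ?lerN2 // nnegrE oppr_ge0 // (le_trans kxc kc).
Qed.

End Lemma4p2Function.

Theorem lemma4p2 (R : realType) (tau q eps eps' : R)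
  (htau0 : 0 < tau) (htau1 : tau < 1) (hq : 0 < q)
  (heps : 0 < eps) (heps' : 0 < eps') (hint : 1 + eps < eps'^-1) :
  ((2 - tau < q -> x2L4 tau q < 1 + eps ->
      inf [set fL4 tau q x | x in `](1 + eps), eps'^-1[] = fL4 tau q (1 + eps)
      /\ fL4 tau q (1 + eps) =
         ((1 + eps) ^+ 2 * (1 - tau) - q * (1 + eps) + 1) ^+ 2 / (1 + eps) ^+ 3)
  /\
  (2 + tau < q -> eps'^-1 < x2L4 tau q ->
      inf [set fL4 tau q x | x in `](1 + eps), eps'^-1[] = fL4 tau q eps'^-1
      /\ fL4 tau q eps'^-1 = eps'^-1 * ((1 - tau) - q * eps' + eps' ^+ 2) ^+ 2)).
Proof.
split=> hq2 hx2.
all: have /(x2L4_root htau1 hq) [x2_gt0 gx2 x2_large] : 4 * (1 - tau) <= q ^+ 2 by nra.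
- have [gc hc] := gL4_gt0_above_root gx2 x2_gt0 x2_large hx2.
  split=> //; apply: inf_image_eq_at_closure.
  + by apply: fL4_continuous; rewrite gt_eqF //; lra.
  + exact: closure_itvoo_left.
  + move=> x; rewrite /= in_itv /= => /andP[cx _].
    by apply: fL4_min_left; lra.
- have gc : gL4 tau q eps'^-1 < 0 by apply: gL4_lt0_below_root gx2 _ _ hx2; lra.
  split; last by rewrite /fL4; field; rewrite gt_eqF.
  apply: inf_image_eq_at_closure.
  + by apply: fL4_continuous; rewrite gt_eqF // invr_gt0.
  + exact: closure_itvoo_right.
  + move=> x; rewrite /= in_itv /= => /andP[xc cx].
    by apply: fL4_min_right; lra.
Qed.
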